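(* Let $g\ge 3$, $m_g=2g+2$, $h_g=\binom{m_g}{2}$, and let $(k,r)\in\Gamma_\psi$. Then: (i) if $k$ has a marking of weight at least $g+1$, then $r$ is not GIT-semistable; (ii) if $\mathrm{supp}(k)$ is reducible and, for some irreducible component of $\mathrm{supp}(k)$, the set of markings of $k$ lying on smooth points of $\mathrm{supp}(k)$ on that component consists of exactly one marking, of weight $1$, then $r$ is not GIT-semistable; (iii) if $\mathrm{supp}(k)$ is integral and all markings of $k$ have weight $1$, then $r\in V$.
   Context: We work over $\mathbb{C}$. Let $\mathcal C\to\mathbb{P}^5\cong|\mathcal O_{\mathbb{P}^2}(2)|$ be the universal plane conic and, for $m\ge 2$, let $\mathrm{Sym}^m_{\mathbb{P}^5}\mathcal C$ be the quotient of the $m$-fold fibre product $\mathcal C\times_{\mathbb{P}^5}\dots\times_{\mathbb{P}^5}\mathcal C$ by the symmetric group $S_m$, with projection $\rho$ to $\mathbb{P}^5$. For $k\in\mathrm{Sym}^m_{\mathbb{P}^5}\mathcal C$, $\mathrm{supp}(k)$ is the plane conic parametrized by $\rho(k)$; the distinct points of $k$ (a multiset of $m$ points on $\mathrm{supp}(k)$) are its markings, and the weight of a marking is the number of times it appears in $k$. $k$ is called degenerate if $\mathrm{supp}(k)$ is not integral. Let $\mathbb P_{h}=\mathrm{Sym}^{h}(\mathbb{P}^2)^\vee$ be the space of configurations of $h$ plane lines (with multiplicities), with its natural $SL(3)$-action and linearization; $\mathbb P_h^{ss}$ denotes the GIT-semistable points. Fix $g\ge3$, $m_g=2g+2$, $h_g=\binom{m_g}{2}$,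 and define the rational map $\psi\colon\mathrm{Sym}^{m_g}_{\mathbb{P}^5}\mathcal C\dashrightarrow\mathbb P_{h_g}$ as follows: if $k$ has distinct markings $p_1,\dots,p_r$ with weights $m_1,\dots,m_r$, then $\psi(k)$ is the configuration consisting of the line $\overline{p_ip_j}$ (spanned by $p_i,p_j$) with multiplicity $m_im_j$ for each $1\le i<j\le r$, together with the tangent line $\mathbb T_{p_h}\mathrm{supp}(k)$ with multiplicity $\binom{m_h}{2}$ for each $h$ with $m_h>1$. Let $\Gamma_\psi\subset\mathrm{Sym}^{m_g}_{\mathbb{P}^5}\mathcal C\times\mathbb P_{h_g}$ be the closure of the graph of $\psi$ and $p\colon\Gamma_\psi\to\mathbb P_{h_g}$ the second projection. Let $V$ be the set of $r\in p(\Gamma_\psi)\cap\mathbb P_{h_g}^{ss}$ such that there is no degenerate $k$ with $(k,r)\in\Gamma_\psi$. (Hilbert–Mumford criterion: $r\in\mathbb P_{h}$ is GIT-semistable iff $\max_{x\in\mathbb{P}^2}\mu_x(r)\le 2h/3$ and $\max_{l}\mu_l(r)\le h/3$, where $\mu_x(r)$ is the number of lines of $r$ through $x$ counted with multiplicity and $\mu_l(r)$ is the multiplicity of the line $l$ in $r$.) *)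

From mathcomp Require Import all_boot all_algebra.
From mathcomp Require Import Rstruct.
From mathcomp.real_closed Require Import complex.
Set Implicit Arguments. Unset Strict Implicit. Unset Printing Implicit Defensive.
Import GRing.Theory Num.Theory.
Local Open Scope ring_scope.

Definition C : numClosedFieldType := (Rdefinitions.R)[i].

(* Homogeneous coordinates: points of P^2 and lines of (P^2)^v are nonzero
   row vectors in C^3; two nonzero vectors give the same point of the
   projective plane iff they span the same row space (proportional). *)
Definition vec3 := 'rV[C]_3.
Definition same_pt (u v : vec3) : bool := (u == v)%MS.

(* bilinear pairing: the point x lies on the line with coefficients u *)
Definition dot (u x : vec3) : C := (u *m x^T) 0 0.

(* a plane conic is given by a nonzero symmetric 3x3 matrix A (up to scalar),
   with equation  q_A(x) = x A x^T = 0 *)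
Definition qf (A : 'M[C]_3) (x : vec3) : C := (x *m A *m x^T) 0 0.
Definition conic_rep (A : 'M[C]_3) : Prop := A^T = A /\ A != 0.

(* supp is a union of two distinct lines {u=0} u {v=0}: the quadratic form
   factors as a product of two non-proportional linear forms *)
Definition line_pair (A : 'M[C]_3) (u v : vec3) : Prop :=
  [/\ u != 0, v != 0, ~~ same_pt u v & forall x, qf A x = dot u x * dot v x].
Definition reducible_conic (A : 'M[C]_3) : Prop := exists u v, line_pair A u v.
(* the conic is integral iff its (nonzero) quadratic form is an irreducible
   polynomial, i.e. it is not a product of two linear forms *)
Definition integral_conic (A : 'M[C]_3) : Prop :=
  ~ exists u v : vec3, forall x, qf A x = dot u x * dot v x.

(* A point k of Sym^m_{P^5} C is represented by (A, p): A a conic,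
   p : 'I_m -> vec3 an ordered list of m points on the conic (nonzero vectors).
   Representatives (A,p),(A',p') give the same k iff A' is proportional to A and
   p' is, up to reordering, pointwise projectively equal to p. *)
Definition sym_rep (m : nat) (A : 'M[C]_3) (p : 'I_m -> vec3) : Prop :=
  conic_rep A /\ forall i, p i != 0 /\ qf A (p i) = 0.

Definition weight (m : nat) (p : 'I_m -> vec3) (i : 'I_m) : nat :=
  #|[set j | same_pt (p j) (p i)]|.

(* A point r of P_h = Sym^h (P^2)^v is represented by l : 'I_h -> vec3
   (nonzero vectors), up to reordering and scaling each entry. *)
Definition lines_rep (h : nat) (l : 'I_h -> vec3) : Prop := forall t, l t != 0.

Definition mu_pt (h : nat) (l : 'I_h -> vec3) (x : vec3) : nat :=
  #|[set t | dot (l t) x == 0]|.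
Definition mu_line (h : nat) (l : 'I_h -> vec3) (L : vec3) : nat :=
  #|[set t | same_pt (l t) L]|.

(* GIT-semistability (Hilbert-Mumford criterion, as in the paper) *)
Definition semistable (h : nat) (l : 'I_h -> vec3) : Prop :=
  (forall x : vec3, x != 0 -> (3 * mu_pt l x <= 2 * h)%N) /\
  (forall L : vec3, L != 0 -> (3 * mu_line l L <= h)%N).

Definition cross (u v : vec3) : vec3 :=
  \row_(k < 3)
    (if k == 0 :> nat then u 0 1 * v 0 2 - u 0 2 * v 0 1
     else if k == 1 :> nat then u 0 2 * v 0 0 - u 0 0 * v 0 2
     else u 0 0 * v 0 1 - u 0 1 * v 0 0).
Definition tangent (A : 'M[C]_3) (x : vec3) : vec3 := x *m A.

Definition pairs (m : nat) := {x : 'I_m * 'I_m | (x.1 < x.2)%N}.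

(* psi on integral supports: the pair {i<j} contributes the line p_i p_j if the
   two points are distinct, and the tangent line at p_i otherwise.  Grouping
   the pairs by markings, this gives exactly the line p_a p_b with multiplicity
   m_a m_b and the tangent at p_a with multiplicity binom(m_a,2). *)
Definition psi_line (m : nat) (A : 'M[C]_3) (p : 'I_m -> vec3) (ij : pairs m) : vec3 :=
  let i := (val ij).1 in let j := (val ij).2 in
  if same_pt (p i) (p j) then tangent A (p i) else cross (p i) (p j).

Definition is_psi (m h : nat) (A : 'M[C]_3) (p : 'I_m -> vec3) (l : 'I_h -> vec3) : Prop :=
  exists f : 'I_h -> pairs m, bijective f /\ forall t, same_pt (l t) (psi_line A p (f t)).

Definition cvgC (z : nat -> C) (z0 : C) : Prop :=
  forall e : C, 0 < e -> exists N, forall n, (N <= n)%N -> `|z n - z0| < e.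

(* (k, r) lies in Gamma_psi, the (Euclidean = Zariski) closure of the graph of
   psi over its domain of regularity (integral supports): there are points
   k_n -> k with integral support and psi(k_n) -> r.  Convergence in the
   projective spaces / symmetric products is convergence of suitable
   (suitably ordered) representatives; since the sequences of representatives
   are existentially quantified we may take the limits to be the given
   representatives. *)
Definition in_Gamma (m h : nat) (A : 'M[C]_3) (p : 'I_m -> vec3) (l : 'I_h -> vec3) : Prop :=
  exists (An : nat -> 'M[C]_3) (pn : nat -> 'I_m -> vec3) (ln : nat -> 'I_h -> vec3),
    [/\ forall n, sym_rep (An n) (pn n) /\ integral_conic (An n),
        forall n, lines_rep (ln n) /\ is_psi (An n) (pn n) (ln n),
        forall a b, cvgC (fun n => An n a b) (A a b),
        forall i c, cvgC (fun n => pn n i 0 c) (p i 0 c) &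
        forall t c, cvgC (fun n => ln n t 0 c) (l t 0 c)].

(* k is degenerate iff supp(k) is not integral *)
Definition in_V (m h : nat) (l : 'I_h -> vec3) : Prop :=
  [/\ semistable l,
      exists A (p : 'I_m -> vec3), sym_rep A p /\ in_Gamma A p l &
      forall A (p : 'I_m -> vec3), sym_rep A p -> in_Gamma A p l -> integral_conic A].

(* Everything is read off from incidences between the lines of r and the
   markings of k.  Along a sequence (k_n, psi(k_n)) -> (k, r), one of the finitely
   many bijections between lines of psi(k_n) and pairs {i < j} of markings occurs
   infinitely often, and "the line passes through both points of its pair" is a
   closed condition; so the lines of r are indexed by the pairs, each passing
   through its two points.  Counting pairs bounds mu_x(r) and mu_L(r) from below:
   a marking of weight w >= g + 1 lies on the lines of all pairs meeting it, more
   than 2h/3 of them (i); in (ii) every marking except the lonely one lies on the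
   other component, and each pair of distinct such markings spans that component,
   which gives more than h/3 lines.  In (iii), three distinct points of an integral
   conic are never collinear, so distinct pairs give distinct lines: mu_L <= 1 and
   mu_x <= m, hence r is semistable, and any other (k', r) in Gamma_psi must have
   distinct markings with at most two on each line, impossible on a line pair once
   m > 4. *)

From mathcomp Require Import all_boot all_algebra.
From mathcomp Require Import Rstruct.
From mathcomp.real_closed Require Import complex.
From mathcomp Require Import order ring zify.
From Stdlib Require Import Classical.
Set Implicit Arguments. Unset Strict Implicit. Unset Printing Implicit Defensive.
Import Order.TTheory GRing.Theory Num.Theory.
Local Open Scope ring_scope.

Lemma ord3P (P : 'I_3 -> Prop) : P 0 -> P 1 -> P 2 -> forall i, P i.
Proof.
by move=> P0 P1 P2 [[|[|[|k]]] // lt_k3];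
  [move: P0 | move: P1 | move: P2]; congr P; apply: val_inj.
Qed.

Lemma vec3P (x y : vec3) : x 0 0 = y 0 0 -> x 0 1 = y 0 1 -> x 0 2 = y 0 2 -> x = y.
Proof. by move=> e0 e1 e2; apply/rowP; elim/ord3P. Qed.

Lemma sum3 (f : 'I_3 -> C) : \sum_(k < 3) f k = f 0 + f 1 + f 2.
Proof.
by rewrite !big_ord_recl big_ord0 addr0 addrA; congr (f _ + f _ + f _); apply: val_inj.
Qed.

Lemma dotE u x : dot u x = u 0 0 * x 0 0 + u 0 1 * x 0 1 + u 0 2 * x 0 2.
Proof. by rewrite /dot mxE sum3 !mxE. Qed.

Lemma qfE A x : qf A x =
  x 0 0 * (x 0 0 * A 0 0 + x 0 1 * A 1 0 + x 0 2 * A 2 0) +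
  x 0 1 * (x 0 0 * A 0 1 + x 0 1 * A 1 1 + x 0 2 * A 2 1) +
  x 0 2 * (x 0 0 * A 0 2 + x 0 1 * A 1 2 + x 0 2 * A 2 2).
Proof. rewrite /qf; do ?[rewrite mxE | rewrite sum3]; ring. Qed.

Lemma dotC u x : dot u x = dot x u.
Proof. by rewrite /dot -[u *m _]trmxK trmx_mul trmxK mxE. Qed.

Lemma dotZl c u x : dot (c *: u) x = c * dot u x.
Proof. by rewrite /dot -scalemxAl mxE. Qed.

Lemma dotDl u v x : dot (u + v) x = dot u x + dot v x.
Proof. by rewrite /dot mulmxDl mxE. Qed.

Lemma dot0l x : dot 0 x = 0.
Proof. by rewrite /dot mul0mx mxE. Qed.

Lemma qfZ A c x : qf A (c *: x) = c ^+ 2 * qf A x.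
Proof. by rewrite /qf linearZ /= -!scalemxAl -scalemxAr !mxE mulrA. Qed.

Lemma dot_tangent A x : dot (tangent A x) x = qf A x.
Proof. by []. Qed.

Lemma exists_dot_neq0 w : w != 0 -> exists e, dot e w != 0.
Proof.
case: (pickP (fun k => w 0 k != 0)) => [k wk_neq0 _ | w0 /eqP[]].
  by exists (delta_mx 0 k); rewrite dotC /dot trmx_delta -colE mxE.
by apply/rowP => k; rewrite mxE; apply/eqP/negbFE/w0.
Qed.

Lemma same_pt_refl u : same_pt u u.
Proof. exact/eqmxP. Qed.

Lemma same_pt_sym u v : same_pt u v = same_pt v u.
Proof. by rewrite /same_pt andbC. Qed.

Lemma same_pt_trans u v w : same_pt u v -> same_pt v w -> same_pt u w.
Proof. by move=> /eqmxP uv /eqmxP vw; apply/eqmxP; apply: eqmx_trans uv vw. Qed.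

Lemma same_pt_scale (c : C) u : c != 0 -> same_pt (c *: u) u.
Proof. by move=> c_neq0; apply/eqmxP; apply: eqmx_scale. Qed.

Lemma same_ptZ (c : C) u v : u != 0 -> u = c *: v -> same_pt u v.
Proof.
move=> u_neq0 def_u; have c_neq0 : c != 0.
  by apply: contraNneq u_neq0 => c0; rewrite def_u c0 scale0r.
by rewrite def_u same_pt_scale.
Qed.

Lemma same_pt_dot u v x : same_pt u v -> dot v x = 0 -> dot u x = 0.
Proof. by case/andP => /sub_rVP[c ->] _; rewrite dotZl => ->; rewrite mulr0. Qed.

Lemma same_pt_dotr u v x : same_pt u v -> dot x v = 0 -> dot x u = 0.
Proof. by rewrite !(dotC x); apply: same_pt_dot. Qed.

Lemma dot_crossl u v : dot (cross u v) u = 0.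
Proof. by rewrite dotE !mxE /=; ring. Qed.

Lemma dot_crossr u v : dot (cross u v) v = 0.
Proof. by rewrite dotE !mxE /=; ring. Qed.

Lemma cross_cross w u v : cross w (cross u v) = dot w v *: u - dot w u *: v.
Proof. by apply: vec3P; rewrite !dotE !mxE /=; ring. Qed.

Lemma cross_eq0 a b : a != 0 -> cross b a = 0 -> exists c, b = c *: a.
Proof.
move=> a_neq0 ba0; have [e ea_neq0] := exists_dot_neq0 a_neq0.
have : dot e a *: b = dot e b *: a.
  apply/eqP; rewrite -subr_eq0 -cross_cross ba0; apply/eqP/vec3P; rewrite !mxE /=; ring.
move/(congr1 ( *:%R (dot e a)^-1)); rewrite !scalerA mulVf // scale1r => ->.
by exists ((dot e a)^-1 * dot e b).
Qed.

Lemma cross_neq0 a b : a != 0 -> b != 0 -> ~~ same_pt a b -> cross a b != 0.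
Proof.
move=> a_neq0 b_neq0; apply: contra => /eqP ab0.
by have [c def_a] := cross_eq0 b_neq0 ab0; apply: same_ptZ def_a.
Qed.

Lemma line_through2 L u v : cross u v != 0 -> dot L u = 0 -> dot L v = 0 ->
  exists c, L = c *: cross u v.
Proof.
move=> uv_neq0 Lu Lv; apply: cross_eq0 => //.
by rewrite cross_cross Lu Lv !scale0r subr0.
Qed.

Lemma same_line_of_common_pts L L' u v :
  L != 0 -> L' != 0 -> u != 0 -> v != 0 -> ~~ same_pt u v ->
  dot L u = 0 -> dot L v = 0 -> dot L' u = 0 -> dot L' v = 0 -> same_pt L L'.
Proof.
move=> L_neq0 L'_neq0 u_neq0 v_neq0 uv Lu Lv L'u L'v.
have uv_neq0 := cross_neq0 u_neq0 v_neq0 uv.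
have [c def_L] := line_through2 uv_neq0 Lu Lv.
have [c' def_L'] := line_through2 uv_neq0 L'u L'v.
have c'_neq0 : c' != 0 by apply: contraNneq L'_neq0 => c'0; rewrite def_L' c'0 scale0r.
by apply: (@same_ptZ (c / c')); rewrite // def_L def_L' scalerA divfK.
Qed.

Definition bf (A : 'M[C]_3) x y := qf A (x + y) - qf A x - qf A y.

Lemma qf_lin3 A (al be ga : C) a b e :
  qf A (al *: a + be *: b + ga *: e) =
  al ^+ 2 * qf A a + be ^+ 2 * qf A b + ga ^+ 2 * qf A e +
  al * be * bf A a b + al * ga * bf A a e + be * ga * bf A b e.
Proof. by rewrite /bf !qfE !mxE; ring. Qed.

Lemma cramer a b e s :
  dot (cross a b) e *: s =
  dot (cross b e) s *: a + dot (cross e a) s *: b + dot (cross a b) s *: e.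
Proof. by apply: vec3P; rewrite !dotE !mxE /=; ring. Qed.

(* Cramer's rule writes D s = al a + be b + ga e with D = det(a, b, e) and
   ga = det(a, b, s); when q(a) = q(b) = 0 every term of q(D s) but al be B(a, b)
   contains ga. *)
Lemma qf_cramer A a b e s : qf A a = 0 -> qf A b = 0 ->
  dot (cross a b) e ^+ 2 * qf A s =
    dot (cross b e) s * dot (cross e a) s * bf A a b +
    dot (cross a b) s *
      dot (bf A a e *: cross b e + bf A b e *: cross e a + qf A e *: cross a b) s.
Proof.
move=> qa qb; rewrite -qfZ cramer qf_lin3 qa qb !dotDl !dotZl !(dotC _ s); ring.
Qed.

Lemma not_integral_of_isotropic_pair A a b :
  a != 0 -> b != 0 -> ~~ same_pt a b -> qf A a = 0 -> qf A b = 0 -> bf A a b = 0 ->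
  ~ integral_conic A.
Proof.
move=> a_neq0 b_neq0 ab qa qb bab; apply.
have [e] := exists_dot_neq0 (cross_neq0 a_neq0 b_neq0 ab); rewrite dotC => D_neq0.
set D := dot (cross a b) e in D_neq0.
exists (cross a b).
exists ((D ^+ 2)^-1 *: (bf A a e *: cross b e + bf A b e *: cross e a + qf A e *: cross a b)).
move=> s.
apply: (mulfI (expf_neq0 2 D_neq0)).
by rewrite qf_cramer // bab mulr0 add0r dotZl mulrCA mulVKf // expf_neq0.
Qed.

Lemma same_pt_of_scaled (d c : C) x y : d != 0 -> x != 0 -> d *: x = c *: y -> same_pt x y.
Proof.
move=> d_neq0 x_neq0 /(congr1 ( *:%R d^-1)); rewrite !scalerA mulVf // scale1r.
exact: same_ptZ.
Qed.

Lemma integral_conic_no_three_collinear A L a b c : integral_conic A -> L != 0 ->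
  a != 0 -> b != 0 -> c != 0 ->
  ~~ same_pt a b -> ~~ same_pt c a -> ~~ same_pt c b ->
  qf A a = 0 -> qf A b = 0 -> qf A c = 0 ->
  dot L a = 0 -> dot L b = 0 -> dot L c = 0 -> False.
Proof.
move=> intA L_neq0 a_neq0 b_neq0 c_neq0 ab ca cb qa qb qc La Lb Lc.
have ab_neq0 := cross_neq0 a_neq0 b_neq0 ab.
have [k def_L] := line_through2 ab_neq0 La Lb.
have k_neq0 : k != 0 by apply: contraNneq L_neq0 => k0; rewrite def_L k0 scale0r.
have abc : dot (cross a b) c = 0.
  by apply/eqP; move: Lc; rewrite def_L dotZl => /eqP; rewrite mulf_eq0 (negbTE k_neq0).
have [e] := exists_dot_neq0 ab_neq0; rewrite dotC => D_neq0.
have := cramer a b e c; rewrite abc scale0r addr0 => Dc.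
have := qf_cramer e c qa qb; rewrite qc abc mul0r addr0 mulr0.
move=> /esym/eqP; rewrite !mulf_eq0 => /orP[/orP[/eqP al0 | /eqP be0] | /eqP bab].
- by move: Dc; rewrite al0 scale0r add0r => /(same_pt_of_scaled D_neq0 c_neq0); apply/negP.
- by move: Dc; rewrite be0 scale0r addr0 => /(same_pt_of_scaled D_neq0 c_neq0); apply/negP.
- exact: not_integral_of_isotropic_pair a_neq0 b_neq0 ab qa qb bab intA.
Qed.

Lemma qf_eq0 A : A^T = A -> (forall x, qf A x = 0) -> A = 0.
Proof.
move=> symA q0.
have entry i j : ((delta_mx 0 i : vec3) *m A *m (delta_mx 0 j : vec3)^T) 0 0 = A i j.
  by rewrite -rowE trmx_delta -colE !mxE.
have qf_delta i j : qf A (delta_mx 0 i + delta_mx 0 j : vec3) = A i i + A j j + A i j + A j i.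
  rewrite /qf linearD /= !(mulmxDl, mulmxDr) -!entry.
  by rewrite !mxE; ring.
have Aii i : A i i = 0 by rewrite -entry; apply: q0.
have Aji i j : A j i = A i j by rewrite -[A in LHS]symA mxE.
apply/matrixP => i j; rewrite mxE; apply/eqP.
have := q0 (delta_mx 0 i + delta_mx 0 j); rewrite qf_delta !Aii Aji !add0r -mulr2n.
by move/eqP; rewrite mulrn_eq0.
Qed.

Lemma cvgCD a b a0 b0 : cvgC a a0 -> cvgC b b0 -> cvgC (fun n => a n + b n) (a0 + b0).
Proof.
move=> ca cb e e_gt0; have e2_gt0 : 0 < e / 2 by rewrite divr_gt0.
have [N1 h1] := ca _ e2_gt0; have [N2 h2] := cb _ e2_gt0.
exists (maxn N1 N2) => n; rewrite geq_max => /andP[n1 n2].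
rewrite opprD addrACA [e]splitr.
exact: le_lt_trans (ler_normD _ _) (ltrD (h1 n n1) (h2 n n2)).
Qed.

Lemma cvgCM a b a0 b0 : cvgC a a0 -> cvgC b b0 -> cvgC (fun n => a n * b n) (a0 * b0).
Proof.
move=> ca cb e e_gt0; have e2_gt0 : 0 < e / 2 by rewrite divr_gt0.
set M := `|a0| + 1; have M_gt0 : 0 < M by rewrite ltr_wpDl.
set K := `|b0| + 1; have K_gt0 : 0 < K by rewrite ltr_wpDl.
have b0_le : `|b0| <= K by rewrite lerDl.
have [N0 h0] := ca _ ltr01.
have [N1 h1] := ca _ (divr_gt0 e2_gt0 K_gt0).
have [N2 h2] := cb _ (divr_gt0 e2_gt0 M_gt0).
exists (maxn N0 (maxn N1 N2)) => n; rewrite !geq_max => /and3P[n0 n1 n2].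
have an_le : `|a n| <= M.
  by rewrite -[a n](subrK a0) addrC (le_trans (ler_normD _ _)) // lerD2l ltW ?h0.
have -> : a n * b n - a0 * b0 = a n * (b n - b0) + b0 * (a n - a0) by ring.
rewrite [e]splitr (le_lt_trans (ler_normD _ _)) // !normrM ltrD //.
  rewrite (le_lt_trans (ler_wpM2r _ an_le)) // -ltr_pdivlMl // mulrC h2 //.
rewrite (le_lt_trans (ler_wpM2r _ b0_le)) // -ltr_pdivlMl // mulrC h1 //.
Qed.

Lemma cvgC_frequently_eq0 z z0 :
  cvgC z z0 -> (forall N, exists2 n, (N <= n)%N & z n = 0) -> z0 = 0.
Proof.
move=> cz freq; case: (eqVneq z0 0) => // z0_neq0; exfalso.
have [|N hN] := cz `|z0|; first by rewrite normr_gt0. have [n Nn zn0] := freq N.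
by move: (hN n Nn); rewrite zn0 sub0r normrN ltxx.
Qed.

Lemma cvgC_dot (u x : nat -> vec3) (u0 x0 : vec3) :
  (forall c, cvgC (fun n => u n 0 c) (u0 0 c)) ->
  (forall c, cvgC (fun n => x n 0 c) (x0 0 c)) ->
  cvgC (fun n => dot (u n) (x n)) (dot u0 x0).
Proof.
move=> cu cx e e_gt0; rewrite dotE.
have [N hN] := cvgCD (cvgCD (cvgCM (cu 0) (cx 0)) (cvgCM (cu 1) (cx 1)))
  (cvgCM (cu 2) (cx 2)) e_gt0.
by exists N => n /hN; rewrite dotE.
Qed.

Lemma exists_frequently_of_finite (T : finType) (Q : nat -> T -> Prop) :
  (forall n, exists x, Q n x) -> exists x, forall N, exists2 n, (N <= n)%N & Q n x.
Proof.
move=> someQ; apply: NNPP => none.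
have finally_not x : exists N, forall n, (N <= n)%N -> ~ Q n x.
  apply: NNPP => not_finally; apply: none; exists x => N; apply: NNPP => not_after.
  by apply: not_finally; exists N => n Nn Qnx; apply: not_after; exists n.
suff [N hN] : exists N, forall x, x \in enum T -> forall n, (N <= n)%N -> ~ Q n x.
  by have [x Qx] := someQ N; apply: (hN x _ N _ Qx); rewrite ?mem_enum.
elim: (enum T) => [|x s [N hN]]; first by exists 0%N.
have [Nx hNx] := finally_not x.
exists (maxn Nx N) => y; rewrite inE => /orP[/eqP-> | ys] n; rewrite geq_max => /andP[nx nN].
  exact: hNx.
exact: hN.
Qed.

Definition lines_through_pairs m h (p : 'I_m -> vec3) (l : 'I_h -> vec3)
    (F : 'I_h -> pairs m) :=
  bijective F /\
  forall t, dot (l t) (p (val (F t)).1) = 0 /\ dot (l t) (p (val (F t)).2) = 0.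

Lemma psi_line_through m A (p : 'I_m -> vec3) (P : pairs m) :
  qf A (p (val P).1) = 0 ->
  dot (psi_line A p P) (p (val P).1) = 0 /\ dot (psi_line A p P) (p (val P).2) = 0.
Proof.
rewrite /psi_line => q1; case: ifP => [same | _]; last by rewrite dot_crossl dot_crossr.
have tangent1 : dot (tangent A (p (val P).1)) (p (val P).1) = 0 by rewrite dot_tangent.
by split; last apply: same_pt_dotr tangent1; rewrite // same_pt_sym.
Qed.

Lemma in_Gamma_lines_through_pairs m h A (p : 'I_m -> vec3) (l : 'I_h -> vec3) :
  in_Gamma A p l -> exists F, lines_through_pairs p l F.
Proof.
case=> An [pn [ln [rep_n psi_n _ cvg_p cvg_l]]].
have [F freqF] : exists F : {ffun 'I_h -> pairs m},
    forall N, exists2 n, (N <= n)%N & lines_through_pairs (pn n) (ln n) F.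
  apply: exists_frequently_of_finite => n.
  have [_ [f [bij_f lf]]] := psi_n n; have [[_ on_conic] _] := rep_n n.
  exists (finfun f); split; first by apply: (eq_bij bij_f) => t; rewrite ffunE.
  move=> t; rewrite ffunE; have [d1 d2] := psi_line_through (on_conic (val (f t)).1).2.
  by split; apply: same_pt_dot (lf t) _.
exists F; split; first by have [n _ []] := freqF 0%N.
move=> t; split; apply: (cvgC_frequently_eq0 (cvgC_dot (cvg_l t) (cvg_p _))) => N;
  by have [n Nn [_ /(_ t) []]] := freqF N; exists n.
Qed.

Local Open Scope nat_scope.

Section PairCounting.

Variables (m : nat) (R : rel 'I_m).
Hypothesis symR : symmetric R.

Lemma card_pairs_ordered :
  #|[set P : pairs m | R (val P).1 (val P).2]| =
  #|[set ab : 'I_m * 'I_m | (ab.1 < ab.2) && R ab.1 ab.2]|.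
Proof.
rewrite -(card_imset _ val_inj); apply: eq_card => -[a b]; rewrite inE /=.
apply/imsetP/andP => [[[[c d] /= cd]] | [ab Rab]]; first by rewrite inE => Rcd [-> ->].
by exists (exist _ (a, b) ab); rewrite ?inE.
Qed.

Lemma card_ordered_swap :
  #|[set ab : 'I_m * 'I_m | (ab.1 < ab.2) && R ab.1 ab.2]| =
  #|[set ab : 'I_m * 'I_m | (ab.2 < ab.1) && R ab.1 ab.2]|.
Proof.
pose sw (ab : 'I_m * 'I_m) := (ab.2, ab.1).
have sw_inj : injective sw by move=> [a b] [c d] [-> ->].
rewrite -(card_imset _ sw_inj); apply: eq_card => -[a b]; rewrite inE /=.
apply/imsetP/idP => [[[c d]] | ba]; first by rewrite inE symR => cd [-> ->].
by exists (b, a); rewrite ?inE // symR.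
Qed.

Lemma card_off_diagonal :
  #|[set ab : 'I_m * 'I_m | (ab.1 != ab.2) && R ab.1 ab.2]| =
  \sum_(a < m) #|[set b | (b != a) && R a b]|.
Proof.
rewrite -sum1_card (eq_bigl (fun ab => (ab.1 != ab.2) && R ab.1 ab.2)); last first.
  by move=> ab; rewrite inE.
rewrite -(pair_big_dep xpredT (fun a b => (a != b) && R a b) (fun _ _ => 1)) /=.
by apply: eq_bigr => a _; rewrite sum1_card; apply: eq_card => b; rewrite inE eq_sym.
Qed.

Lemma pairs_double_count :
  2 * #|[set P : pairs m | R (val P).1 (val P).2]| =
  \sum_(a < m) #|[set b | (b != a) && R a b]|.
Proof.
rewrite -card_off_diagonal mul2n -addnn card_pairs_ordered {2}card_ordered_swap.
rewrite -(cardsID [set ab : 'I_m * 'I_m | ab.1 < ab.2]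
  [set ab : 'I_m * 'I_m | (ab.1 != ab.2) && R ab.1 ab.2]).
congr (_ + _); apply: eq_card => -[a b]; rewrite !inE /= -val_eqE neq_ltn;
  by case: ltngtP; rewrite /= ?andbT ?andbF.
Qed.

End PairCounting.

Lemma sum_if_mem m (K : {set 'I_m}) c1 c2 :
  \sum_(a < m) (if a \in K then c1 else c2) = #|K| * c1 + (m - #|K|) * c2.
Proof.
rewrite (bigID (mem K)) /= (eq_bigr (fun=> c1)) => [|a ->//].
rewrite [X in _ + X](eq_bigr (fun=> c2)) => [|a /negbTE->//].
by rewrite !sum_nat_const -[m in m - _](card_ord m) -(cardC K) addKn.
Qed.

Lemma card_pairs_meeting m (K : {set 'I_m}) :
  #|K| * (2 * m - #|K| - 1) <=
  2 * #|[set P : pairs m | ((val P).1 \in K) || ((val P).2 \in K)]|.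
Proof.
rewrite (@pairs_double_count _ (fun a b => (a \in K) || (b \in K))) => [|a b]; last exact: orbC.
have row_card a : #|[set b | (b != a) && ((a \in K) || (b \in K))]| =
             if a \in K then m.-1 else #|K|.
  case: ifP => Ka; last first.
    apply: eq_card => b; rewrite !inE /= andb_idl //.
    by apply: contraTneq => ->; rewrite Ka.
  by rewrite -[m in m.-1]card_ord -(cardsC1 a); apply: eq_card => b; rewrite !inE /= andbT.
rewrite (eq_bigr _ (fun a _ => row_card a)) sum_if_mem.
have := max_card K; rewrite card_ord; nia.
Qed.

Lemma card_pairs_inside m (U : {set 'I_m}) :
  2 * #|[set P : pairs m | ((val P).1 \in U) && ((val P).2 \in U)]| = #|U| * (#|U| - 1).
Proof.
rewrite (@pairs_double_count _ (fun a b => (a \in U) && (b \in U))) => [|a b]; last exact: andbC.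
have row_card a : #|[set b | (b != a) && ((a \in U) && (b \in U))]| =
             if a \in U then #|U| - 1 else 0.
  case: ifP => Ua; last by apply: eq_card0 => b; rewrite !inE andbF.
  by rewrite (cardsD1 a U) Ua add1n subn1; apply: eq_card => b; rewrite !inE.
by rewrite (eq_bigr _ (fun a _ => row_card a)) sum_if_mem muln0 addn0.
Qed.

Lemma card_pairs_avoiding m g (i : 'I_m) (S : rel 'I_m) :
  symmetric S -> reflexive S -> (forall a, #|[set b | S b a]| <= g) ->
  (m - 1) * (m - 1 - g) <=
  2 * #|[set P : pairs m | [&& (val P).1 != i, (val P).2 != i & ~~ S (val P).1 (val P).2]]|.
Proof.
move=> symS reflS small_classes.
rewrite (@pairs_double_count _ (fun a b => [&& a != i, b != i & ~~ S a b])) => [|a b];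
  last by rewrite symS andbCA.
have row_card a : (if a \in [set i] then 0 else m - 1 - g) <=
             #|[set b | (b != a) && [&& a != i, b != i & ~~ S a b]]|.
  rewrite inE; case: eqVneq => //= a_neq_i.
  apply: (@leq_trans #|~: (i |: [set b | S b a])|); last first.
    apply: subset_leq_card; apply/subsetP => b; rewrite !inE negb_or symS => /andP[-> nSab].
    by rewrite nSab /= andbT; apply: contraNneq nSab => ->.
  have := cardsC (i |: [set b | S b a]); rewrite card_ord cardsU1.
  by have := small_classes a; case: (i \notin _) => /=; lia.
apply: leq_trans (leq_sum _ (fun a _ => row_card a)).
by rewrite sum_if_mem cards1.
Qed.

Lemma bin2_even g : 'C(2 * g + 2, 2) = (g + 1) * (2 * g + 1).
Proof.
rewrite bin2 -[X in X./2](_ : ((g + 1) * (2 * g + 1)).*2 = _) ?doubleK //.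
by rewrite -mul2n addn2 /=; ring.
Qed.

Lemma card_le_of_bij (T U : finType) (F : T -> U) (Pr : pred U) (S : {set T}) :
  bijective F -> (forall t, Pr (F t) -> t \in S) -> #|[set u | Pr u]| <= #|S|.
Proof.
case=> G FK GK PrS; rewrite -(card_imset _ (can_inj FK)); apply: subset_leq_card.
by apply/subsetP => u; rewrite inE => Pru; apply/imsetP; exists (G u); rewrite ?GK ?PrS ?GK.
Qed.

Local Open Scope ring_scope.

Section Incidence.

Variables (m h : nat) (p : 'I_m -> vec3) (l : 'I_h -> vec3) (F : 'I_h -> pairs m).
Hypothesis lpF : lines_through_pairs p l F.

Lemma mu_pt_ge_weight i :
  (weight p i * (2 * m - weight p i - 1) <= 2 * mu_pt l (p i))%N.
Proof.
have [bijF onF] := lpF; set K := [set j | same_pt (p j) (p i)].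
apply: leq_trans (card_pairs_meeting K) _; rewrite leq_mul2l /=.
apply: card_le_of_bij bijF _ => t; rewrite !inE => Kt; apply/eqP.
by case/orP: Kt; rewrite same_pt_sym => Kj; apply: same_pt_dotr Kj _; case: (onF t).
Qed.

Hypotheses (l_neq0 : lines_rep l) (p_neq0 : forall j, p j != 0).

Lemma mu_line_ge_pairs_on L (Pr : pred (pairs m)) : L != 0 ->
  (forall P, Pr P -> [/\ dot L (p (val P).1) = 0, dot L (p (val P).2) = 0 &
                        ~~ same_pt (p (val P).1) (p (val P).2)]) ->
  (#|[set P | Pr P]| <= mu_line l L)%N.
Proof.
have [bijF onF] := lpF; move=> L_neq0 PrL; apply: card_le_of_bij bijF _ => t /PrL[L1 L2 ns].
have [l1 l2] := onF t; rewrite inE.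
exact: same_line_of_common_pts (l_neq0 t) L_neq0 (p_neq0 _) (p_neq0 _) ns l1 l2 L1 L2.
Qed.

End Incidence.

Lemma heavy_marking_not_semistable g A (p : 'I_(2 * g + 2) -> vec3)
    (l : 'I_('C(2 * g + 2, 2)) -> vec3) i :
  sym_rep A p -> in_Gamma A p l -> (g + 1 <= weight p i)%N -> ~ semistable l.
Proof.
move=> [_ onA] inG heavy [mu_pt_le _].
have [F lpF] := in_Gamma_lines_through_pairs inG.
have := mu_pt_ge_weight lpF i; have := mu_pt_le _ (onA i).1; have := bin2_even g.
have := max_card [set j | same_pt (p j) (p i)]; rewrite card_ord -/(weight p i).
move: heavy; set w := weight p i; set mu := mu_pt l (p i).
have : (0 <= (w - (g + 1)) * (2 * g + 2 - w))%N by [].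
nia.
Qed.

Lemma weight1_same_pt m (p : 'I_m -> vec3) i j :
  weight p i = 1%N -> same_pt (p j) (p i) -> j = i.
Proof.
move=> /eqP/cards1P[k Ki] ji.
have : j \in [set j | same_pt (p j) (p i)] by rewrite inE.
have : i \in [set j | same_pt (p j) (p i)] by rewrite inE same_pt_refl.
by rewrite Ki !inE => /eqP-> /eqP.
Qed.

Lemma lonely_marking_not_semistable g A (p : 'I_(2 * g + 2) -> vec3)
    (l : 'I_('C(2 * g + 2, 2)) -> vec3) u v i :
  sym_rep A p -> lines_rep l -> in_Gamma A p l -> line_pair A u v ->
  dot u (p i) = 0 -> weight p i = 1%N ->
  (forall j, dot u (p j) = 0 -> dot v (p j) != 0 -> same_pt (p j) (p i)) ->
  ~ semistable l.
Proof.
move=> repAp l_neq0 inG [u_neq0 v_neq0 _ qA_uv] ui wi lonely ssl.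
case: (boolP [exists a, g + 1 <= weight p a]%N) => [/existsP[a heavy] | /existsPn light].
  exact: heavy_marking_not_semistable repAp inG heavy ssl.
have {}light a : (weight p a <= g)%N by rewrite leqNgt -addn1 light.
have [_ onA] := repAp; have [F lpF] := in_Gamma_lines_through_pairs inG.
have on_v j : j != i -> dot v (p j) = 0.
  move=> /eqP ji; case: (eqVneq (dot v (p j)) 0) => // vj; exfalso.
  apply/ji/(weight1_same_pt wi)/(lonely _ _ vj); apply/eqP.
  by move: (onA j).2; rewrite qA_uv => /eqP; rewrite mulf_eq0 (negbTE vj) orbF.
set Pr := fun P : pairs _ =>
  [&& (val P).1 != i, (val P).2 != i & ~~ same_pt (p (val P).1) (p (val P).2)].
have lines_v : (#|[set P | Pr P]| <= mu_line l v)%N.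
  apply: (mu_line_ge_pairs_on lpF l_neq0 (fun j => (onA j).1) v_neq0).
  by move=> P /and3P[P1 P2 ns]; split; rewrite ?on_v.
have := card_pairs_avoiding i (S := fun a b => same_pt (p a) (p b)) (fun a b => same_pt_sym _ _)
  (fun a => same_pt_refl _) light.
have := ssl.2 _ v_neq0; have := bin2_even g; move: lines_v.
set T := #|_|; set mu := mu_line l v; nia.
Qed.

Definition distinct_markings m (p : 'I_m -> vec3) :=
  forall a b, a != b -> ~~ same_pt (p a) (p b).

Lemma pair_neq m (P : pairs m) : (val P).1 != (val P).2.
Proof. by rewrite -val_eqE neq_ltn (valP P). Qed.

Lemma pairs_neq_other_end m (P Q : pairs m) : P != Q ->
  exists c, [/\ c = (val Q).1 \/ c = (val Q).2, c != (val P).1 & c != (val P).2].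
Proof.
move=> PQ.
case: (boolP (((val Q).1 != (val P).1) && ((val Q).1 != (val P).2))) => [/andP[] | Q1].
  by exists (val Q).1; split; first left.
case: (boolP (((val Q).2 != (val P).1) && ((val Q).2 != (val P).2))) => [/andP[] | Q2].
  by exists (val Q).2; split; first right.
exfalso; move: PQ Q1 Q2; rewrite -val_eqE !negb_and !negbK.
case: P Q => [[a b] /= ab] [[c d] /= cd] neq /orP[]/eqP ec /orP[]/eqP ed;
  by move: cd neq; rewrite ec ed ?eqxx ?ltnn // ltnNge (ltnW ab).
Qed.

Section DistinctMarkingsOnIntegralConic.

Variables (m h : nat) (A : 'M[C]_3) (p : 'I_m -> vec3) (l : 'I_h -> vec3).
Variable F : 'I_h -> pairs m.
Hypotheses (intA : integral_conic A) (repAp : sym_rep A p) (l_neq0 : lines_rep l).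
Hypotheses (distinct : distinct_markings p) (lpF : lines_through_pairs p l F).

Lemma lines_through_pairs_distinct t1 t2 : t1 != t2 -> ~~ same_pt (l t1) (l t2).
Proof.
have [_ onA] := repAp; have [bijF onF] := lpF.
move=> t12; apply/negP => same12.
have [|c [Q2c P1c P2c]] := @pairs_neq_other_end _ (F t1) (F t2).
  by apply: contra t12 => /eqP/(bij_inj bijF)->.
have lc : dot (l t1) (p c) = 0.
  by apply: same_pt_dot same12 _; case: Q2c => ->; case: (onF t2).
have [l1 l2] := onF t1; have ab := distinct (pair_neq (F t1)).
apply: (integral_conic_no_three_collinear intA (l_neq0 t1) (onA _).1 (onA _).1 (onA c).1 ab
  (distinct P1c) (distinct P2c) (onA _).2 (onA _).2 (onA c).2 l1 l2 lc).
Qed.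

Lemma mu_line_le1 L : (mu_line l L <= 1)%N.
Proof.
apply/card_le1_eqP => t1 t2; rewrite !inE => L1 L2.
case: (eqVneq t2 t1) => // t21; case/negP: (lines_through_pairs_distinct t21).
by apply: same_pt_trans L2 _; rewrite same_pt_sym.
Qed.

Lemma mu_pt_le x : x != 0 -> (mu_pt l x <= m)%N.
Proof.
have [_ onA] := repAp; have [bijF onF] := lpF; move=> x_neq0.
pose far t := if same_pt (p (val (F t)).1) x then (val (F t)).2 else (val (F t)).1.
have l_far t : dot (l t) (p (far t)) = 0 by rewrite /far; case: ifP => _; case: (onF t).
have far_not_x t : ~~ same_pt (p (far t)) x.
  rewrite /far; case: ifP => [x1 | -> //]; apply: contra (distinct (pair_neq (F t))) => x2.
  by apply: same_pt_trans x1 _; rewrite same_pt_sym.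
rewrite -[X in (mu_pt _ _ <= X)%N]card_ord; apply: (@leq_card_in _ _ far) => t1 t2.
rewrite !inE => /eqP x1 /eqP x2 e12.
case: (eqVneq t1 t2) => // t12; case/negP: (lines_through_pairs_distinct t12).
apply: (same_line_of_common_pts (l_neq0 t1) (l_neq0 t2) (onA _).1 x_neq0 (far_not_x t1)) => //.
by rewrite e12.
Qed.

End DistinctMarkingsOnIntegralConic.

Section MarkingsFromLineCounts.

Variables (m h : nat) (p : 'I_m -> vec3) (l : 'I_h -> vec3) (F : 'I_h -> pairs m).
Hypotheses (lpF : lines_through_pairs p l F) (p_neq0 : forall j, p j != 0).

Lemma distinct_of_mu_pt_le : (3 < m)%N -> (forall x, x != 0 -> (mu_pt l x <= m)%N) ->
  distinct_markings p.
Proof.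
move=> m_gt3 mu_pt_le a b ab; apply/negP => same_ab.
have weight_ge2 : (2 <= weight p a)%N.
  have abK : [set a; b] \subset [set j | same_pt (p j) (p a)].
    by apply/subsetP => j; rewrite !inE => /orP[]/eqP->; rewrite ?same_pt_refl // same_pt_sym.
  by apply: leq_trans (subset_leq_card abK); rewrite cards2 ab.
have := mu_pt_ge_weight lpF a; have := mu_pt_le _ (p_neq0 a).
have := max_card [set j | same_pt (p j) (p a)]; rewrite card_ord -/(weight p a).
move: weight_ge2; set w := weight p a; set mu := mu_pt l (p a).
have : (0 <= (w - 2) * (m - w))%N by [].
nia.
Qed.

Lemma few_points_on_line : lines_rep l -> distinct_markings p ->
  (forall L, (mu_line l L <= 1)%N) ->
  forall L, L != 0 -> (#|[set j | dot L (p j) == 0%R]| <= 2)%N.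
Proof.
move=> l_neq0 distinct mu_line_le L L_neq0; set W := [set j | dot L (p j) == 0].
have := card_pairs_inside W; have := mu_line_le L.
have := mu_line_ge_pairs_on lpF l_neq0 p_neq0
  (Pr := fun P : pairs m => ((val P).1 \in W) && ((val P).2 \in W)) L_neq0.
have PrW (P : pairs m) : ((val P).1 \in W) && ((val P).2 \in W) ->
  [/\ dot L (p (val P).1) = 0, dot L (p (val P).2) = 0 & ~~ same_pt (p (val P).1) (p (val P).2)].
  by rewrite !inE => /andP[/eqP-> /eqP->]; split => //; apply: distinct (pair_neq P).
move=> /(_ PrW); set T := #|_|; set mu := mu_line l L; set w := #|W|; nia.
Qed.

End MarkingsFromLineCounts.

Lemma integral_of_few_collinear m A (p : 'I_m -> vec3) : sym_rep A p -> (4 < m)%N ->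
  (forall L, L != 0 -> (#|[set j | dot L (p j) == 0%R]| <= 2)%N) -> integral_conic A.
Proof.
move=> [[symA A_neq0] onA] m_gt4 few [u [v qA_uv]].
have factor_neq0 w : (forall x, dot w x = 0 -> qf A x = 0) -> w != 0.
  move=> qA_w; apply: contraNneq A_neq0 => w0; apply/eqP; apply: qf_eq0 => // x.
  by apply: qA_w; rewrite w0 dot0l.
have u_neq0 : u != 0 by apply: factor_neq0 => x; rewrite qA_uv => ->; rewrite mul0r.
have v_neq0 : v != 0 by apply: factor_neq0 => x; rewrite qA_uv => ->; rewrite mulr0.
have cover : [set j | dot u (p j) == 0] :|: [set j | dot v (p j) == 0] = setT.
  by apply/setP => j; rewrite !inE -mulf_eq0 -qA_uv (onA j).2 eqxx.
have := leq_card_setU [set j | dot u (p j) == 0] [set j | dot v (p j) == 0].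
rewrite cover cardsT card_ord => /leq_trans/(_ (leq_add (few _ u_neq0) (few _ v_neq0))).
by rewrite leqNgt m_gt4.
Qed.

Lemma distinct_of_weight1 m (p : 'I_m -> vec3) :
  (forall i, weight p i = 1%N) -> distinct_markings p.
Proof. by move=> w1 a b; apply: contra => /(weight1_same_pt (w1 b))->. Qed.

Lemma integral_distinct_in_V g A (p : 'I_(2 * g + 2) -> vec3)
    (l : 'I_('C(2 * g + 2, 2)) -> vec3) :
  (2 <= g)%N -> sym_rep A p -> lines_rep l -> in_Gamma A p l -> integral_conic A ->
  distinct_markings p -> in_V (2 * g + 2) l.
Proof.
move=> g_ge2 repAp l_neq0 inG intA distinct.
have [F lpF] := in_Gamma_lines_through_pairs inG.
have mu_line_le := mu_line_le1 intA repAp l_neq0 distinct lpF.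
have mu_pt_le := mu_pt_le intA repAp l_neq0 distinct lpF.
have binE := bin2_even g.
split; first split.
- by move=> x /mu_pt_le; nia.
- by move=> L _; have := mu_line_le L; nia.
- by exists A, p.
move=> A' p' repAp' inG'; have [F' lpF'] := in_Gamma_lines_through_pairs inG'.
have p'_neq0 j : p' j != 0 := (repAp'.2 j).1.
have distinct' : distinct_markings p'.
  by apply: (distinct_of_mu_pt_le lpF' p'_neq0) mu_pt_le; lia.
apply: (integral_of_few_collinear repAp'); first by lia.
exact: few_points_on_line lpF' p'_neq0 l_neq0 distinct' mu_line_le.
Qed.

Unset Implicit Arguments.

Theorem lemma3p1 (g : nat) (hg : (3 <= g)%N)
  (A : 'M[C]_3) (p : 'I_(2 * g + 2) -> vec3) (l : 'I_('C(2 * g + 2, 2)) -> vec3) :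
  sym_rep A p -> lines_rep l -> in_Gamma A p l ->
  [/\ (* (i) *)
      (exists i, (g + 1 <= weight p i)%N) -> ~ semistable l,
      (* (ii) *)
      (exists u v, line_pair A u v /\
         exists i, [/\ dot u (p i) = 0, dot v (p i) != 0, weight p i = 1%N &
           forall j, dot u (p j) = 0 -> dot v (p j) != 0 -> same_pt (p j) (p i)]) ->
      ~ semistable l &
      (* (iii) *)
      integral_conic A -> (forall i, weight p i = 1%N) -> in_V (2 * g + 2) l].
Proof.
move=> repAp l_neq0 inG; split.
- by case=> i; apply: heavy_marking_not_semistable repAp inG.
- case=> u [v [uv [i [ui _ wi lonely]]]].
  exact: lonely_marking_not_semistable repAp l_neq0 inG uv ui wi lonely.
- move=> intA /distinct_of_weight1 distinct.
  exact: integral_distinct_in_V (ltnW hg) repAp l_neq0 inG intA distinct.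
Qed.
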